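(* Let $G$ be a graph and let $v$ be a cut vertex of $G$ which decomposes $G$ into $G_1=G(V_1)$ and $H=G(U)$. If $H$ is a tree, then for every divisor $f$ on $G$ we have $\rho_G(f)=\rho_{G_1}(f_{G/H})$.
   Context: Graphs are finite, undirected, connected, loopless, possibly with multiple edges; $G(W)$ denotes the subgraph induced by $W\subseteq V(G)$. A vertex $v$ is a cut vertex if removing it disconnects $G$; it decomposes $G$ into $G_1=G(V_1)$ and $H=G(U)$ if $V(G)=V_1\cup U$, $V_1\cap U=\{v\}$, both induced subgraphs are connected, and no edge joins $V_1\setminus\{v\}$ to $U\setminus\{v\}$. For a divisor $f$ on $G$ (a function $V(G)\to\mathbb{Z}$), the contraction $f_{G/H}$ is the divisor on $G_1$ with $f_{G/H}(u)=f(u)$ for $u\in V_1\setminus\{v\}$ and $f_{G/H}(v)=\sum_{u\in U}f(u)$. Degree: $\deg(f)=\sum f(v)$. Laplacian $\Delta_G$: $\Delta_G(u,u)=\deg(u)$, $\Delta_G(u,w)=-e(u,w)$ (number of edges) for $u\ne w$. $f\sim g$ if $g=f+x\Delta_G$ for some $x\in\mathbb{Z}^{V(G)}$. Effective: all values $\ge0$; L-effective: linearly equivalent to an effective divisor. The rank $\rho_G(f)$ is $-1$ if $f$ is not L-effective, and otherwise the largest integer $r\ge0$ such that $f-\lambda$ is L-effective for every effective $\lambda$ of degree $r$ on $G$. $\rho_{G_1}$ is the rank computed in the graph $G_1$. *)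

From mathcomp Require Import all_boot all_order all_algebra.
Set Implicit Arguments. Unset Strict Implicit. Unset Printing Implicit Defensive.
Import Order.TTheory GRing.Theory Num.Theory.

(* A finite loopless multigraph on vertex type T is given by an edge
   multiplicity function e : T -> T -> nat (symmetric, e x x = 0).
   Induced subgraphs G(W) are handled by working relative to a vertex set
   W : {set T}; a divisor on G(W) is a function T -> int whose values
   outside W are irrelevant. *)

Section Graphs.
Variables (T : finType) (e : T -> T -> nat).

Definition loopless_sym := (forall x, e x x = 0%N) /\ (forall x y, e x y = e y x).

Definition adj_in (W : {set T}) : rel T :=
  fun a b => [&& a \in W, b \in W & (0 < e a b)%N].

Definition connected_in (W : {set T}) :=
  W != set0 /\ forall x y, x \in W -> y \in W -> connect (adj_in W) x y.

Definition cut_vertex (v : T) :=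
  ~ connected_in (setT :\ v).

Definition tree_in (U : {set T}) :=
  [/\ connected_in U,
      (forall x y, x \in U -> y \in U -> (e x y <= 1)%N) &
      ~ exists c : seq T, (2 < size c)%N /\ ucycle (adj_in U) c].

Definition decomposes (v : T) (V1 U : {set T}) :=
  [/\ V1 :|: U = setT, V1 :&: U = [set v], connected_in V1, connected_in U &
      forall x y, x \in V1 :\ v -> y \in U :\ v -> e x y = 0%N].

Local Open Scope ring_scope.

Definition lap (W : {set T}) (u w : T) : int :=
  if u == w then (\sum_(z in W) e u z)%N%:Z else - (e u w)%:Z.

Definition deg_in (W : {set T}) (f : T -> int) : int := \sum_(u in W) f u.

Definition effective_in (W : {set T}) (f : T -> int) := forall u, u \in W -> 0 <= f u.

Definition lin_equiv_in (W : {set T}) (f g : T -> int) :=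
  exists x : T -> int, forall u, u \in W -> g u = f u + \sum_(w in W) x w * lap W w u.

Definition Leffective_in (W : {set T}) (f : T -> int) :=
  exists g, lin_equiv_in W f g /\ effective_in W g.

Definition rank_prop (W : {set T}) (f : T -> int) (r : int) :=
  forall lam : T -> int, effective_in W lam -> deg_in W lam = r ->
    Leffective_in W (fun u => f u - lam u).

Definition is_rank (W : {set T}) (f : T -> int) (r : int) :=
  (~ Leffective_in W f /\ r = -1)
  \/ (Leffective_in W f /\ 0 <= r /\ rank_prop W f r /\
      forall r', 0 <= r' -> rank_prop W f r' -> r' <= r).

Definition contract (U : {set T}) (v : T) (f : T -> int) : T -> int :=
  fun u => if u == v then \sum_(w in U) f w else f u.

End Graphs.

(* Contraction turns firing in G into firing in G_1: a vertex of H other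
   than v keeps all its chips inside H when it fires, so its firing is
   invisible in f_{G/H}, while a vertex of G_1 fires as it does in G_1, v
   collecting whatever lands in H.  Conversely, in a tree every divisor can be
   concentrated at the root v by firing vertices of H other than v: peel off a
   leaf, push its chips onto its neighbour and recurse.  Hence f is
   L-effective on G iff f_{G/H} is L-effective on G_1.  Effective divisors of
   degree r on G contract to effective divisors of degree r on G_1, and those
   on G_1 extend by zero to G, so the rank conditions coincide for every r. *)

From mathcomp Require Import all_boot all_order all_algebra.
From mathcomp Require Import zify.
Import Order.TTheory GRing.Theory Num.Theory.
Set Implicit Arguments. Unset Strict Implicit. Unset Printing Implicit Defensive.
Local Open Scope ring_scope.

Section Paths.
Variables (T : finType) (r : rel T).

Lemma exists_maximal_upath x :
  exists s, [/\ path r x s, uniq (x :: s) & forall y, r (last x s) y -> y \in x :: s].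
Proof.
pose P n := [exists s : n.-tuple T, path r x s && uniq (x :: s)].
have P0 : P 0%N by apply/existsP; exists [tuple].
have Pbound n : P n -> (n <= #|T|)%N.
  case/existsP=> s /andP[_ /card_uniqP s_card].
  by have := max_card (mem (x :: s)); rewrite s_card /= size_tuple => /ltnW.
have [m /existsP[s /andP[s_path s_uniq]] s_max] :=
  ex_maxnP (ex_intro P 0%N P0) Pbound.
exists s; split=> // y r_last_y; apply: contraTT isT => y_new.
have : P (size (rcons s y)).
  apply/existsP; exists (in_tuple (rcons s y)).
  by rewrite rcons_path s_path r_last_y -rcons_cons rcons_uniq y_new s_uniq.
by move/s_max; rewrite size_rcons size_tuple ltnn.
Qed.

Lemma path_chord_ucycle x s l z :
  path r x (rcons s l) -> uniq (x :: rcons s l) ->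
  z \in x :: s -> z != last x s -> r l z ->
  exists c, (2 < size c)%N /\ ucycle r c.
Proof.
elim: s x => [|y s IHs] x s_path s_uniq z_in z_last r_lz.
  by move: z_in z_last; rewrite inE => /eqP ->; rewrite eqxx.
move: z_in; rewrite inE => /orP[/eqP z_x|z_in]; last first.
  by case/andP: s_path => _ /IHs; case/andP: s_uniq => _ /[swap] /[apply]; apply.
exists (x :: rcons (y :: s) l); split; first by rewrite /= size_rcons.
rewrite /ucycle s_uniq andbT.
by rewrite [cycle _ _]rcons_path s_path last_rcons -z_x r_lz.
Qed.

End Paths.

Section Laplacian.
Variables (T : finType) (e : T -> T -> nat).
Hypothesis e_loopless : forall x, e x x = 0%N.

Lemma lap_setD1 (W : {set T}) l w u : l \in W ->
  lap e W w u = lap e (W :\ l) w u + (if w == u then (e u l)%:Z else 0).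
Proof.
move=> lW; rewrite /lap; have [->|_] := eqVneq w u; last by rewrite addr0.
by rewrite (big_setD1 l lW) /= PoszD addrC.
Qed.

Lemma sum_lap_setD1 (W : {set T}) l (z : T -> int) u : l \in W ->
  \sum_(w in W) z w * lap e W w u =
  z l * lap e W l u + \sum_(w in W :\ l) z w * lap e (W :\ l) w u
  + (if u \in W :\ l then z u * (e u l)%:Z else 0).
Proof.
move=> lW; rewrite (big_setD1 l lW) /= -addrA; congr (_ + _).
under eq_bigr => w _ do rewrite (lap_setD1 _ _ lW) mulrDr.
rewrite big_split /=; congr (_ + _); case: ifP => [uWl|uWl].
  rewrite (big_setD1 u uWl) /= eqxx big1 ?addr0 // => w /setD1P[w_u _].
  by rewrite (negbTE w_u) mulr0.
apply: big1 => w wWl; case: eqVneq => [w_u|_]; last by rewrite mulr0.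
by rewrite -w_u wWl in uWl.
Qed.

Lemma lap_setT_local (W : {set T}) w u :
  (forall z, z \notin W -> e w z = 0%N) -> lap e setT w u = lap e W w u.
Proof.
move=> w_local; rewrite /lap; case: eqVneq => // _; congr Posz.
rewrite (bigID (mem W)) /= [X in (_ + X)%N]big1 ?addn0 => [|z /andP[_]].
  by apply: eq_bigl => z; rewrite inE.
exact: w_local.
Qed.

Lemma sum_lap_row (W : {set T}) w : w \in W -> \sum_(x in W) lap e W w x = 0.
Proof.
move=> wW; rewrite (bigD1 w wW) /=.
have -> : \sum_(x in W | x != w) lap e W w x = - \sum_(x in W | x != w) (e w x)%:Z.
  rewrite -sumrN; apply: eq_bigr => x /andP[_ x_w].
  by rewrite /lap eq_sym (negbTE x_w).
by rewrite /lap eqxx (bigD1 w wW) /= e_loopless add0n raddf_sum subrr.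
Qed.

Lemma Leffective_in_ext (W : {set T}) (f f' : T -> int) :
  {in W, f =1 f'} -> Leffective_in e W f -> Leffective_in e W f'.
Proof.
move=> ff' [g [[x g_eq] g_eff]]; exists g; split=> //; exists x => u uW.
by rewrite g_eq // ff'.
Qed.

End Laplacian.

Lemma is_rank_transfer (T : finType) (e e' : T -> T -> nat) (W W' : {set T})
    (f f' : T -> int) :
  (Leffective_in e W f <-> Leffective_in e' W' f') ->
  (forall r, rank_prop e W f r <-> rank_prop e' W' f' r) ->
  forall r, is_rank e W f r <-> is_rank e' W' f' r.
Proof.
move=> Leff_eq rank_eq r.
split=> [[[/Leff_eq ? ?]|[/Leff_eq ? [? [/rank_eq ? max_r]]]]|
         [[/Leff_eq ? ?]|[/Leff_eq ? [? [/rank_eq ? max_r]]]]];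
  [left|right|left|right]; do ![split=> //] => r' r'_ge0 /rank_eq; exact: max_r.
Qed.

Section Trees.
Variables (T : finType) (e : T -> T -> nat).
Hypothesis e_loopless : forall x, e x x = 0%N.
Hypothesis e_sym : forall x y, e x y = e y x.

Lemma adj_in_neq (W : {set T}) a b : adj_in e W a b -> a != b.
Proof. by case/and3P=> _ _; apply: contraTneq => ->; rewrite e_loopless. Qed.

Lemma adj_inC (W : {set T}) a b : adj_in e W a b = adj_in e W b a.
Proof. by rewrite /adj_in e_sym andbCA. Qed.

Lemma tree_leaf U v : tree_in e U -> v \in U -> U :\ v != set0 ->
  exists l p, [/\ l \in U :\ v, p \in U, e l p = 1%N &
                  forall z, z \in U -> z != p -> e l z = 0%N].
Proof.
case=> [[_ U_conn] U_simple U_acyclic] vU /set0Pn[u /setD1P[u_v uU]].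
have [s [s_path s_uniq s_max]] := exists_maximal_upath (adj_in e U) v.
case/lastP: s s_path s_uniq s_max => [|s l] s_path s_uniq s_max.
  case/connectP: (U_conn v u vU uU) => [[|a q] /=].
    by move=> _ u_eq; rewrite -u_eq eqxx in u_v.
  by case/andP=> /[dup] /adj_in_neq + /s_max; rewrite inE eq_sym => /negbTE ->.
move: (s_path); rewrite rcons_path => /andP[_ adj_pl].
set p := last v s in adj_pl; case/and3P: (adj_pl) => pU lU e_pl.
have l_v : l != v.
  by apply: contraTneq s_uniq => ->; rewrite /= mem_rcons inE eqxx.
exists l, p; split=> //; first exact/setD1P.
  by have := U_simple l p lU pU; rewrite e_sym in e_pl; lia.
move=> z zU z_p; apply/eqP; rewrite -leqn0 leqNgt; apply/negP => e_lz.
have adj_lz : adj_in e U l z by rewrite /adj_in lU zU e_lz.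
have := s_max z; rewrite last_rcons -rcons_cons mem_rcons inE => /(_ adj_lz).
case/orP=> [/eqP z_l|z_on]; first by rewrite z_l e_loopless in e_lz.
by apply: U_acyclic; apply: (path_chord_ucycle s_path s_uniq z_on z_p adj_lz).
Qed.

Lemma path_setD1 (U : {set T}) l x q :
  path (adj_in e U) x q -> x != l -> l \notin q -> path (adj_in e (U :\ l)) x q.
Proof.
elim: q x => [//|b q IHq] x /= /andP[/and3P[xU bU e_xb] q_path] x_l.
rewrite inE negb_or eq_sym => /andP[b_l l_q].
by rewrite /adj_in !in_setD1 x_l b_l xU bU e_xb IHq.
Qed.

Lemma connect_setD1_leaf (U : {set T}) l p x y :
  (forall z, z \in U -> z != p -> e l z = 0%N) ->
  x != l -> y != l -> connect (adj_in e U) x y -> connect (adj_in e (U :\ l)) x y.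
Proof.
move=> l_leaf x_l y_l /connectP[q q_path y_last].
case/shortenP: q_path y_last => q' q'_path q'_uniq _ y_last.
apply/connectP; exists q' => //; apply: path_setD1 => //.
apply/negP => /splitPr q'_eq; move: q'_eq q'_path q'_uniq y_last => [q1 q2].
rewrite cat_path -cat_cons cat_uniq last_cat.
move=> /andP[_ /andP[adj_al]] + /and3P[_ /hasPn q2_new _].
case: q2 q2_new => [_ _ /eqP|b q2 q2_new /andP[adj_lb _] _].
  by rewrite /= (negbTE y_l).
have only_p a : adj_in e U l a -> a = p.
  by case/and3P=> _ aU; apply: contraTeq => a_p; rewrite l_leaf.
have last_p : last x q1 = p by apply: only_p; rewrite adj_inC.
have b_in : b \in [:: l, b & q2] by rewrite !inE eqxx orbT.
by have := q2_new b b_in; rewrite (only_p _ adj_lb) -last_p mem_last.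
Qed.

Lemma tree_setD1_leaf (U : {set T}) l p :
  tree_in e U -> l \in U -> (forall z, z \in U -> z != p -> e l z = 0%N) ->
  U :\ l != set0 -> tree_in e (U :\ l).
Proof.
case=> [[_ U_conn] U_simple U_acyclic] lU l_leaf Ul_ne.
have sub_adj : subrel (adj_in e (U :\ l)) (adj_in e U).
  by move=> a b /and3P[/setD1P[_ aU] /setD1P[_ bU] e_ab]; rewrite /adj_in aU bU.
split.
- split=> // x y /setD1P[x_l xU] /setD1P[y_l yU].
  exact: connect_setD1_leaf l_leaf x_l y_l (U_conn x y xU yU).
- by move=> x y /setD1P[_ xU] /setD1P[_ yU]; apply: U_simple.
- case=> c [c_size /andP[c_cycle c_uniq]]; apply: U_acyclic.
  by exists c; rewrite /ucycle c_uniq (sub_cycle sub_adj).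
Qed.

Definition concentrates_at (W : {set T}) (v : T) :=
  forall g : T -> int, exists z : T -> int,
    (forall w, w \notin W :\ v -> z w = 0) /\
    forall u, u \in W :\ v -> g u + \sum_(w in W) z w * lap e W w u = 0.

Lemma concentrates_at_leaf (W : {set T}) v l p :
  l \in W :\ v -> p \in W -> e l p = 1%N ->
  (forall z, z \in W -> z != p -> e l z = 0%N) ->
  concentrates_at (W :\ l) v -> concentrates_at W v.
Proof.
move=> /setD1P[l_v lW] pW e_lp l_leaf Wl_conc g.
have p_l : p != l by apply: contra_eqN e_lp => /eqP ->; rewrite e_loopless.
have pWl : p \in W :\ l by apply/setD1P.
(* The chips of l are first moved onto p, and l then fires as often as p
   does, corrected by its own initial chips g l. *)
pose g' u := if u == p then g p + g l else g u.
have [z' [z'_out z'_eq]] := Wl_conc g'.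
exists (fun w => if w == l then z' p - g l else z' w); split.
  move=> w; have [->|w_l] := eqVneq w l; first by rewrite in_setD1 l_v lW.
  move=> w_out; apply: z'_out; apply: contra w_out.
  by rewrite !in_setD1 => /and3P[-> _ ->].
move=> u /setD1P[u_v uW]; rewrite (sum_lap_setD1 e _ _ lW) eqxx.
under eq_bigr => w /setD1P[w_l _] do rewrite (negbTE w_l).
have z'_lap_l : \sum_(w in W :\ l) z' w * lap e (W :\ l) w l = - z' p.
  rewrite (big_setD1 p pWl) /= big1 ?addr0.
    by rewrite /lap (negbTE p_l) e_sym e_lp mulrN1.
  move=> w /setD1P[w_p /setD1P[w_l wW]].
  by rewrite /lap (negbTE w_l) e_sym l_leaf // oppr0 mulr0.
have [u_l|u_l] := eqVneq u l.
  have deg_l : lap e W l l = 1.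
    rewrite /lap eqxx (big_setD1 p pW) /= e_lp big1 // => w /setD1P[w_p wW].
    exact: l_leaf.
  by rewrite u_l setD11 z'_lap_l deg_l; lia.
have := z'_eq u; rewrite !in_setD1 u_v u_l uW => /(_ isT).
rewrite /= /lap eq_sym (negbTE u_l) e_sym /g'.
have [->|u_p] := eqVneq u p; first by rewrite e_sym e_lp; lia.
by rewrite (e_sym u l) (l_leaf u uW u_p); lia.
Qed.

Lemma tree_concentrates_at (U : {set T}) v :
  tree_in e U -> v \in U -> concentrates_at U v.
Proof.
move: {2}#|U| (erefl #|U|) => n; elim: n U => [|n IHn] U U_card U_tree vU.
  by move/eqP: U_card; rewrite cards_eq0 => /eqP U0; rewrite U0 inE in vU.
have [Uv0 g|Uv_ne] := eqVneq (U :\ v) set0.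
  by exists (fun=> 0); split=> // u; rewrite Uv0 inE.
have [l [p [lUv pU e_lp l_leaf]]] := tree_leaf U_tree vU Uv_ne.
have [l_v lU] := setD1P lUv.
apply: (concentrates_at_leaf lUv pU e_lp l_leaf); apply: IHn.
- by move: U_card; rewrite (cardsD1 l) lU => -[].
- apply: (tree_setD1_leaf U_tree lU l_leaf); apply/set0Pn; exists v.
  by rewrite in_setD1 eq_sym l_v.
- by rewrite in_setD1 eq_sym l_v.
Qed.

End Trees.

Section Decomposition.
Variables (T : finType) (e : T -> T -> nat).
Hypothesis e_loopless : forall x, e x x = 0%N.
Hypothesis e_sym : forall x y, e x y = e y x.
Variables (v : T) (V1 U : {set T}).
Hypothesis V1U_setT : V1 :|: U = setT.
Hypothesis V1IU : V1 :&: U = [set v].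
Hypothesis no_cross_edge : forall x y, x \in V1 :\ v -> y \in U :\ v -> e x y = 0%N.

Lemma no_cross_edge_sym x y : x \in U :\ v -> y \in V1 :\ v -> e x y = 0%N.
Proof. by rewrite e_sym => *; apply: no_cross_edge. Qed.

Lemma in_V1_and_U u : (u \in V1) && (u \in U) = (u == v).
Proof. by rewrite -in_setI V1IU inE. Qed.

Lemma in_V1_or_U u : (u \in V1) || (u \in U).
Proof. by rewrite -in_setU V1U_setT inE. Qed.

Lemma v_in_V1 : v \in V1.
Proof. by have := in_V1_and_U v; rewrite eqxx => /andP[]. Qed.

Lemma v_in_U : v \in U.
Proof. by have := in_V1_and_U v; rewrite eqxx => /andP[]. Qed.

Lemma notin_V1 u : (u \notin V1) = (u \in U :\ v).
Proof.
have := in_V1_and_U u; have := in_V1_or_U u; rewrite in_setD1.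
by case: (u \in V1); case: (u \in U); case: (u == v).
Qed.

Lemma notin_U u : (u \notin U) = (u \in V1 :\ v).
Proof.
have := in_V1_and_U u; have := in_V1_or_U u; rewrite in_setD1.
by case: (u \in V1); case: (u \in U); case: (u == v).
Qed.

Lemma big_setT_V1_U (R : Type) (idx : R) (op : Monoid.com_law idx) (F : T -> R) :
  \big[op/idx]_(z in setT) F z =
  op (\big[op/idx]_(z in V1) F z) (\big[op/idx]_(z in U :\ v) F z).
Proof.
rewrite (bigID (mem V1)) /=; apply: f_equal2; apply: eq_bigl => z.
  by rewrite inE.
by rewrite inE notin_V1.
Qed.

Lemma lap_setT_U u w : u \in U :\ v ->
  lap e setT w u = if w \in U then lap e U w u else 0.
Proof.
move=> uUv; have [->|w_u] := eqVneq w u.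
  rewrite (setD1P uUv).2; apply: lap_setT_local => z.
  by rewrite notin_U; apply: no_cross_edge_sym.
rewrite /lap (negbTE w_u); case: ifP => // /negbT.
by rewrite notin_U => wV1v; rewrite no_cross_edge.
Qed.

Lemma contract_lap u w : u \in V1 ->
  contract U v (lap e setT w) u = if w \in V1 then lap e V1 w u else 0.
Proof.
rewrite /contract; have [->|u_v] := eqVneq u v => uV1; last first.
  have uV1v : u \in V1 :\ v by apply/setD1P.
  have [->|w_u] := eqVneq w u.
    rewrite uV1; apply: lap_setT_local => z.
    by rewrite notin_V1; apply: no_cross_edge.
  rewrite /lap (negbTE w_u); case: ifP => // /negbT.
  by rewrite notin_V1 e_sym => wUv; rewrite no_cross_edge.
have [wUv|wUv] := boolP (w \in U :\ v).
  have w_local z : z \notin U -> e w z = 0%N.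
    by rewrite notin_U; apply: no_cross_edge_sym.
  have wV1 : w \notin V1 by rewrite notin_V1.
  rewrite (negbTE wV1); under eq_bigr => x _ do rewrite (lap_setT_local _ w_local).
  by apply: sum_lap_row => //; case/setD1P: wUv.
have wV1 : w \in V1 by rewrite -[_ \in _]negbK notin_V1.
rewrite wV1 (big_setD1 v v_in_U) /=.
have [->|w_v] := eqVneq w v.
  under eq_bigr => x /setD1P[x_v _] do rewrite /lap eq_sym (negbTE x_v).
  rewrite sumrN /lap eqxx -!raddf_sum big_setT_V1_U /=.
  by rewrite PoszD addrK.
have wV1v : w \in V1 :\ v by rewrite in_setD1 w_v.
rewrite big1 ?addr0; first by rewrite /lap (negbTE w_v).
move=> x /setD1P[x_v xU].
have x_w : w != x by apply: contraNneq w_v => w_x; rewrite -in_V1_and_U wV1 w_x.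
by rewrite /lap (negbTE x_w) no_cross_edge //; apply/setD1P.
Qed.

Lemma contractB (f g : T -> int) u :
  contract U v (fun w => f w - g w) u = contract U v f u - contract U v g u.
Proof. by rewrite /contract; case: ifP; rewrite ?sumrB. Qed.

Lemma eq_contract (f g : T -> int) : f =1 g -> contract U v f =1 contract U v g.
Proof. by move=> fg u; rewrite /contract; under eq_bigr do rewrite fg; rewrite fg. Qed.

Lemma contract_vanishing (f : T -> int) u :
  (forall w, w \in U :\ v -> f w = 0) -> u \in V1 -> contract U v f u = f u.
Proof.
move=> f0 uV1; rewrite /contract; case: eqVneq => [->|//].
by rewrite (big_setD1 v v_in_U) /= big1 ?addr0.
Qed.

Lemma contract_effective (f : T -> int) :
  effective_in setT f -> effective_in V1 (contract U v f).
Proof.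
move=> f_eff u _; rewrite /contract; case: ifP => _; last exact: f_eff.
by apply: sumr_ge0 => w _; apply: f_eff.
Qed.

Lemma deg_contract (f : T -> int) : deg_in V1 (contract U v f) = deg_in setT f.
Proof.
rewrite /deg_in big_setT_V1_U !(big_setD1 v v_in_V1) /= {1}/contract eqxx.
rewrite (big_setD1 v v_in_U) /= -addrA [_ + \sum_(i in V1 :\ v) _]addrC addrA.
congr (_ + _ + _); apply: eq_bigr => w /setD1P[w_v _].
by rewrite /contract (negbTE w_v).
Qed.

Lemma contract_fire (g x : T -> int) u : u \in V1 ->
  contract U v (fun u => g u + \sum_(w in setT) x w * lap e setT w u) u =
  contract U v g u + \sum_(w in V1) x w * lap e V1 w u.
Proof.
move=> uV1; transitivity
    (contract U v g u + \sum_(w in setT) x w * contract U v (lap e setT w) u).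
  rewrite /contract; case: (u == v) => //; rewrite big_split /= exchange_big /=.
  by congr (_ + _); apply: eq_bigr => w _; rewrite mulr_sumr.
congr (_ + _); rewrite [RHS]big_mkcond /=.
apply: eq_big => [w|w _]; first by rewrite inE.
by rewrite contract_lap //; case: (w \in V1); rewrite ?mulr0.
Qed.

Lemma Leffective_contract (g : T -> int) :
  Leffective_in e setT g -> Leffective_in e V1 (contract U v g).
Proof.
move=> [h [[x h_eq] h_eff]]; exists (contract U v h); split.
  exists x => u uV1; rewrite -contract_fire //.
  by apply: eq_contract => w; apply: h_eq; rewrite inE.
exact: contract_effective.
Qed.

Hypothesis U_concentrates : concentrates_at e U v.

Lemma contract_Leffective (g : T -> int) :
  Leffective_in e V1 (contract U v g) -> Leffective_in e setT g.
Proof.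
move=> [h' [[x h'_eq] h'_eff]].
(* Fire x in G, then clear U :\ v by firing inside the tree; the latter firing
   is invisible in the contraction. *)
pose g1 u := g u + \sum_(w in setT) x w * lap e setT w u.
have [z [z_out z_eq]] := U_concentrates g1.
pose h u := g u + \sum_(w in setT) (x w + z w) * lap e setT w u.
have h_Uv u : u \in U :\ v -> h u = 0.
  move=> uUv; rewrite -(z_eq u uUv) /h -addrA; congr (_ + _).
  under eq_bigr do rewrite mulrDl; rewrite big_split /=; congr (_ + _).
  rewrite [RHS]big_mkcond /=; apply: eq_big => [w|w _]; first by rewrite inE.
  by rewrite lap_setT_U //; case: (w \in U); rewrite ?mulr0.
have h_V1 u : u \in V1 -> h u = h' u.
  move=> uV1; rewrite -(contract_vanishing h_Uv uV1) contract_fire // h'_eq //.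
  congr (_ + _); apply: eq_bigr => w wV1.
  by rewrite z_out ?addr0 // -notin_V1 wV1.
exists h; split; first by exists (fun w => x w + z w).
move=> u _; have [uV1|] := boolP (u \in V1); first by rewrite h_V1 //; apply: h'_eff.
by rewrite notin_V1 => /h_Uv ->.
Qed.

Lemma Leffective_in_contract (g : T -> int) :
  Leffective_in e setT g <-> Leffective_in e V1 (contract U v g).
Proof. by split; [apply: Leffective_contract | apply: contract_Leffective]. Qed.

Lemma rank_prop_contract (f : T -> int) r :
  rank_prop e setT f r <-> rank_prop e V1 (contract U v f) r.
Proof.
split=> f_rank lam lam_eff lam_deg; last first.
  apply/contract_Leffective/(Leffective_in_ext _ (f_rank _ (contract_effective lam_eff) _)).
    by move=> u _; rewrite contractB.
  by rewrite deg_contract.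
pose lam' u := if u \in V1 then lam u else 0.
have lam'_eff : effective_in setT lam'.
  by move=> u _; rewrite /lam'; case: ifP => // /lam_eff.
have lam'_deg : deg_in setT lam' = r.
  by rewrite -lam_deg /deg_in [RHS]big_mkcond; apply: eq_bigl => u; rewrite inE.
apply: Leffective_in_ext (Leffective_contract (f_rank _ lam'_eff lam'_deg)) => u uV1.
rewrite contractB (contract_vanishing (f := lam')) // /lam' ?uV1 // => w.
by rewrite -notin_V1 => /negbTE ->.
Qed.

End Decomposition.

Theorem mainTheorem3 (T : finType) (e : T -> T -> nat) (v : T) (V1 U : {set T})
  (f : T -> int) :
  loopless_sym e -> connected_in e setT ->
  cut_vertex e v -> decomposes e v V1 U -> tree_in e U ->
  forall r : int, is_rank e setT f r <-> is_rank e V1 (contract U v f) r.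
Proof.
move=> [e_loopless e_sym] _ _ [V1U_setT V1IU _ _ no_cross_edge] U_tree.
have U_conc := tree_concentrates_at e_loopless e_sym U_tree (v_in_U V1IU).
apply: is_rank_transfer.
- exact: Leffective_in_contract.
- by move=> r; apply: rank_prop_contract.
Qed.
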